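(* Let $S$ be a numerical semigroup minimally generated by $n_1<\cdots<n_e$, with conductor $c$. Let $m\ge 2c-1$, let $M=\{m=m_1<\cdots<m_r\}$ be an $(S,m,r)$-amenable set, and let $L=M\cap[m,m+n_e)$. Then $\mathrm D(M)=(M\setminus L)\cup\mathrm D(L)$, and moreover $\sharp\mathrm D(M)=\sharp(M\setminus L)+\sharp\mathrm D(L)$.
   Context: A numerical semigroup is a submonoid of $\mathbb N$ with finite complement; its conductor $c$ is the least element of $S$ such that $c+n\in S$ for all $n\in\mathbb N$. For $x\in S$, $\mathrm D(x)=\{\alpha\in S\mid x-\alpha\in S\}$ and for $A\subseteq S$, $\mathrm D(A)=\bigcup_{x\in A}\mathrm D(x)$. A set $M=\{m_1<\cdots<m_r\}\subseteq S$ with $2c-1\le m=m_1$ is $(S,m,r)$-amenable if $\mathrm D(m_i)\cap[m,\infty)\subseteq M$ for all $i$. *)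

From mathcomp Require Import all_boot all_order.
Set Implicit Arguments. Unset Strict Implicit. Unset Printing Implicit Defensive.

Definition numerical_semigroup (S : pred nat) : Prop :=
  [/\ S 0,
      (forall x y, S x -> S y -> S (x + y)) &
      exists b, forall n, b <= n -> S n].

Inductive gen_by (g : seq nat) : nat -> Prop :=
| gen_by0 : gen_by g 0
| gen_byS x y : y \in g -> gen_by g x -> gen_by g (y + x).

Definition minimally_generated (S : pred nat) (gens : seq nat) : Prop :=
  [/\ sorted ltn gens,
      (forall x, S x <-> gen_by gens x) &
      forall y, y \in gens -> ~ gen_by [seq z <- gens | z != y] y].

Definition is_conductor (S : pred nat) (c : nat) : Prop :=
  [/\ S c, (forall n, S (c + n)) &
      forall c', S c' -> (forall n, S (c' + n)) -> c <= c'].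

Definition Dx (S : pred nat) (x alpha : nat) : bool :=
  [&& S alpha, alpha <= x & S (x - alpha)].

(* D(A) = union of D(x), x in A, as an explicit (duplicate-free) list;
   every element of D(x) is <= x, so it suffices to scan [0, max A]. *)
Definition DA (S : pred nat) (A : seq nat) : seq nat :=
  [seq a <- iota 0 (\max_(x <- A) x).+1 | has (fun x => Dx S x a) A].

Definition amenable (S : pred nat) (c m r : nat) (M : seq nat) : Prop :=
  [/\ sorted ltn M, size M = r, head 0 M = m, 0 < r & all S M] /\
  (2 * c - 1 <= m)%N /\
  (forall x a, x \in M -> Dx S x a -> m <= a -> a \in M).

(* An element
   a of D(x), x in M, with x >= m + ne and a < m can be pushed down: writing
   x - a = g + t with g a generator, x - g = a + t lies in D(x), is >= m and
   hence in M by amenability, and a lies in D(x - g).  Iterating, a lands in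
   D(L).  Elements of D(x) that are >= m are in M, hence either in M \ L or in
   L, and each y lies in D(y).  The union is disjoint since D(L) is bounded by
   m + ne while M \ L starts there. *)

From mathcomp Require Import all_boot all_order.
From mathcomp Require Import zify.

Lemma mem_DA (S : pred nat) (A : seq nat) a :
  (a \in DA S A) = has (fun x => Dx S x a) A.
Proof.
rewrite /DA mem_filter mem_iota add0n ltnS; apply: andb_idr => /hasP [x xA].
by case/and3P => _ ax _; apply: leq_trans ax (leq_bigmax_seq _ xA isT).
Qed.

Lemma Dx_refl (S : pred nat) x : S 0 -> S x -> Dx S x x.
Proof. by move=> S0 Sx; rewrite /Dx Sx leqnn subnn S0. Qed.

Lemma DA_subset (S : pred nat) (A B : seq nat) :
  {subset A <= B} -> {subset DA S A <= DA S B}.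
Proof.
move=> AB a; rewrite !mem_DA => /hasP [x xA Dxa].
by apply/hasP; exists x; first exact: AB.
Qed.

Lemma sorted_leq_last (s : seq nat) x : sorted ltn s -> x \in s -> x <= last 0 s.
Proof.
case: s => [|y s] //=; elim: s y x => [|z s IH] y x /=; first by rewrite inE => _ /eqP ->.
move=> /andP [yz zs]; rewrite inE => /orP [/eqP ->|xs]; last exact: IH.
exact: leq_trans (ltnW yz) (IH z z zs (mem_head _ _)).
Qed.

Lemma head_leq_sorted (s : seq nat) x : sorted ltn s -> x \in s -> head 0 s <= x.
Proof.
case: s => [|y s] //= ys; rewrite inE => /orP [/eqP -> //|xs].
exact/ltnW/(allP (order_path_min ltn_trans ys)).
Qed.

Lemma gen_by_split_gen (g : seq nat) s : gen_by g s -> 0 < s ->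
  exists y t, [/\ y \in g, 0 < y, gen_by g t & s = y + t].
Proof.
elim=> [|t y yg gt IH] // s_gt0.
by case: (posnP y) => [y0|y_gt0]; [subst y; exact: IH | exists y, t].
Qed.

Lemma size_disjoint_union (T : eqType) (s s1 s2 : seq T) :
  uniq s -> uniq s1 -> uniq s2 -> [predI s1 & s2] =1 pred0 ->
  s =i [predU s1 & s2] -> size s = size s1 + size s2.
Proof.
move=> us us1 us2 dis eqs; rewrite -size_cat; apply/perm_size/uniq_perm => //.
- rewrite cat_uniq us1 us2 andbT /=; apply/hasP => -[a a2 a1].
  by have := dis a; rewrite inE /= a1 a2.
- by move=> a; rewrite eqs mem_cat.
Qed.

Section WindowDecomposition.

Variables (S : pred nat) (M : seq nat) (m k : nat).

Hypothesis S0 : S 0.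
Hypothesis S_add : forall x y, S x -> S y -> S (x + y).
Hypothesis S_split :
  forall s, S s -> 0 < s -> exists g t, [/\ 0 < g <= k, S g, S t & s = g + t].
Hypothesis M_uniq : uniq M.
Hypothesis M_S : all S M.
Hypothesis M_ge : {in M, forall x, m <= x}.
Hypothesis M_closed : forall x a, x \in M -> Dx S x a -> m <= a -> a \in M.

Definition window := [seq x <- M | (m <= x) && (x < m + k)].
Definition outside_window := [seq x <- M | x \notin window].

Lemma mem_window a : (a \in window) = (a \in M) && (a < m + k).
Proof.
rewrite mem_filter andbC; case aM: (a \in M) => //=.
by rewrite M_ge.
Qed.

Lemma mem_outside_window a : (a \in outside_window) = (a \in M) && (m + k <= a).
Proof. by rewrite mem_filter mem_window negb_and -leqNgt andbC; case: (a \in M). Qed.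

Lemma Dx_descend x a : x \in M -> m + k <= x -> a < m -> Dx S x a ->
  exists2 y, y \in M & y < x /\ Dx S y a.
Proof.
move=> xM xk am /and3P [Sa ax Sxa].
have [g [t [/andP [g_gt0 gk] Sg St xa]]] := S_split _ Sxa ltac:(lia).
have xg : x - g = a + t by lia.
exists (x - g); last by split; [lia | rewrite /Dx Sa xg leq_addr addKn].
apply: (M_closed _ _ xM); last by lia.
have xxg : x - (x - g) = g by lia.
by rewrite /Dx xxg Sg xg S_add // andbT; lia.
Qed.

Lemma Dx_outside_or_window x a : x \in M -> Dx S x a ->
  (a \in outside_window) || (a \in DA S window).
Proof.
elim/ltn_ind: x => x IH xM Dxa.
have Sa : S a by case/and3P: Dxa.
have [xk|kx] := ltnP x (m + k).
  by apply/orP; right; rewrite mem_DA; apply/hasP; exists x; rewrite ?mem_window ?xM.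
have [ma|am] := leqP m a.
  have aM := M_closed _ _ xM Dxa ma.
  have [ak|ka] := ltnP a (m + k); last by rewrite mem_outside_window aM ka.
  apply/orP; right; rewrite mem_DA; apply/hasP; exists a; last exact: Dx_refl.
  by rewrite mem_window aM ak.
have [y yM [yx Dya]] := Dx_descend _ _ xM kx am Dxa.
exact: (IH y).
Qed.

Lemma DA_window_decomposition :
  DA S M =i [predU outside_window & DA S window].
Proof.
move=> a; rewrite !inE; apply/idP/idP.
  by rewrite mem_DA => /hasP [x xM]; apply: Dx_outside_or_window.
case/orP => [|]; last by apply: DA_subset => x; rewrite mem_filter => /andP [].
rewrite mem_outside_window => /andP [aM _]; rewrite mem_DA; apply/hasP.
by exists a => //; apply/Dx_refl/(allP M_S).
Qed.

Lemma size_DA_window_decomposition :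
  size (DA S M) = size outside_window + size (DA S window).
Proof.
apply: size_disjoint_union DA_window_decomposition.
- exact/filter_uniq/iota_uniq.
- exact: filter_uniq.
- exact/filter_uniq/iota_uniq.
move=> a /=; apply/andP => -[]; rewrite mem_outside_window mem_DA => /andP [_ ka].
case/hasP => x; rewrite mem_window => /andP [_ xk] /and3P [_ ax _]; lia.
Qed.

End WindowDecomposition.

Lemma generated_split (S : pred nat) (gens : seq nat) :
  sorted ltn gens -> (forall x, S x <-> gen_by gens x) ->
  forall s, S s -> 0 < s ->
  exists g t, [/\ 0 < g <= last 0 gens, S g, S t & s = g + t].
Proof.
move=> gens_sorted S_gens s /S_gens gs /(gen_by_split_gen _ _ gs) [g [t [gg g_gt0 gt ->]]].
exists g, t; split => //; last exact/S_gens.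
- by rewrite g_gt0 sorted_leq_last.
- by apply/S_gens; rewrite -[g]addn0; apply: gen_byS gg (gen_by0 _).
Qed.

Theorem lemma3p10 (S : pred nat) (gens : seq nat) (c m r : nat) (M : seq nat) :
  numerical_semigroup S ->
  minimally_generated S gens ->
  is_conductor S c ->
  2 * c - 1 <= m ->
  amenable S c m r M ->
  let ne := last 0 gens in
  let L := [seq x <- M | (m <= x) && (x < m + ne)] in
  let MminusL := [seq x <- M | x \notin L] in
  (DA S M =i [predU MminusL & DA S L]) /\
  size (DA S M) = size MminusL + size (DA S L).
Proof.
move=> [S0 S_add _] [gens_sorted S_gens _] _ _.
move=> [[M_sorted _ M_head _ M_S] [_ M_closed]] ne L ML.
have M_uniq : uniq M by apply: sorted_uniq M_sorted; [exact: ltn_trans | exact: ltnn].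
have M_ge : {in M, forall x, m <= x} by move=> x; rewrite -M_head; apply: head_leq_sorted.
have S_split := generated_split _ _ gens_sorted S_gens.
split; first exact: DA_window_decomposition.
exact: size_DA_window_decomposition.
Qed.
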